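(* Let $\mathcal{D}$ be an algebra of bounded real functions with the Stone property and let $(L,\mathcal{D})$ be a sup-norm-closable Lagrangian. Then its associated energy form $(\mathcal{E}_L,\mathcal{D})$ is a sup-norm-closable bilinear form.
   Context: Stone property: $f\wedge1\in\mathcal{D}$. $T_1(x)=\max(x,0)\wedge1$. A Lagrangian is a symmetric bilinear map $(f,g)\mapsto L_{f,g}$ into the dual $\mathcal{D}'$ of $(\mathcal{D},\|\cdot\|_{\sup})$, with each $L_f:=L_{f,f}$ positive and $L_f-L_{T_1(f)}$ positive for all $f$. A bilinear form is sup-norm-closable if every $\mathcal{E}$-Cauchy $(f_n)$ with $\|f_n\|_{\sup}\to0$ has $\mathcal{E}(f_n)\to0$; a Lagrangian is sup-norm-closable if for each $h\ge0$ in $\mathcal{D}$ the bilinear form $(f,g)\mapsto L_{f,g}(h)$ is sup-norm-closable. The associated energy form is $\mathcal{E}_L(f)=\frac12\|L_f\|_{\mathcal{D}'}$ (with $\|L\|_{\mathcal{D}'}=\sup\{|L(h)|:\|h\|_{\sup}\le1\}$), which satisfies the parallelogram law, polarized to a bilinear form $\mathcal{E}_L(f,g)=\frac14(\mathcal{E}_L(f+g)-\mathcal{E}_L(f-g))$. *)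

From Stdlib Require Import Reals Lra Classical ClassicalEpsilon.
Open Scope R_scope.

Definition fadd {X} (f g : X -> R) : X -> R := fun x => f x + g x.
Definition fscal {X} (a : R) (f : X -> R) : X -> R := fun x => a * f x.
Definition fmul {X} (f g : X -> R) : X -> R := fun x => f x * g x.
Definition fsub {X} (f g : X -> R) : X -> R := fun x => f x - g x.
Definition fzero {X} : X -> R := fun _ => 0.

Definition sup_le {X} (f : X -> R) (c : R) : Prop := forall x, Rabs (f x) <= c.

Definition bounded_fun {X} (f : X -> R) : Prop := exists c, sup_le f c.

Definition bounded_algebra {X} (D : (X -> R) -> Prop) : Prop :=
  D fzero /\
  (forall f g, D f -> D g -> D (fadd f g)) /\
  (forall a f, D f -> D (fscal a f)) /\
  (forall f g, D f -> D g -> D (fmul f g)) /\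
  (forall f, D f -> bounded_fun f).

Definition stone_property {X} (D : (X -> R) -> Prop) : Prop :=
  forall f, D f -> D (fun x => Rmin (f x) 1).

Definition T1 {X} (f : X -> R) : X -> R := fun x => Rmin (Rmax (f x) 0) 1.

Definition in_dual {X} (D : (X -> R) -> Prop) (l : (X -> R) -> R) : Prop :=
  (forall h1 h2, D h1 -> D h2 -> l (fadd h1 h2) = l h1 + l h2) /\
  (forall a h, D h -> l (fscal a h) = a * l h) /\
  (exists C, forall h c, D h -> sup_le h c -> Rabs (l h) <= C * c).

Definition positive_functional {X} (D : (X -> R) -> Prop) (l : (X -> R) -> R) : Prop :=
  forall h, D h -> (forall x, 0 <= h x) -> 0 <= l h.

Definition lagrangian {X} (D : (X -> R) -> Prop)
    (L : (X -> R) -> (X -> R) -> (X -> R) -> R) : Prop :=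
  (forall f g, D f -> D g -> in_dual D (L f g)) /\
  (forall f g h, D f -> D g -> D h -> L f g h = L g f h) /\
  (forall f1 f2 g h, D f1 -> D f2 -> D g -> D h ->
      L (fadd f1 f2) g h = L f1 g h + L f2 g h) /\
  (forall a f g h, D f -> D g -> D h -> L (fscal a f) g h = a * L f g h) /\
  (forall f, D f -> positive_functional D (L f f)) /\
  (forall f, D f -> D (T1 f) ->
      positive_functional D (fun h => L f f h - L (T1 f) (T1 f) h)).

Definition sup_norm_closable {X} (D : (X -> R) -> Prop)
    (B : (X -> R) -> (X -> R) -> R) : Prop :=
  forall fs : nat -> X -> R,
    (forall n, D (fs n)) ->
    (forall eps, 0 < eps -> exists N, forall n m, (N <= n)%nat -> (N <= m)%nat ->
        Rabs (B (fsub (fs n) (fs m)) (fsub (fs n) (fs m))) < eps) ->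
    (forall eps, 0 < eps -> exists N, forall n, (N <= n)%nat -> sup_le (fs n) eps) ->
    Un_cv (fun n => B (fs n) (fs n)) 0.

Definition lagrangian_sup_norm_closable {X} (D : (X -> R) -> Prop)
    (L : (X -> R) -> (X -> R) -> (X -> R) -> R) : Prop :=
  forall h, D h -> (forall x, 0 <= h x) ->
    sup_norm_closable D (fun f g => L f g h).

Definition dual_norm {X} (D : (X -> R) -> Prop) (l : (X -> R) -> R) : R :=
  epsilon (inhabits 0)
    (is_lub (fun y => exists h, D h /\ sup_le h 1 /\ y = Rabs (l h))).

Definition energy {X} (D : (X -> R) -> Prop)
    (L : (X -> R) -> (X -> R) -> (X -> R) -> R) (f : X -> R) : R :=
  / 2 * dual_norm D (L f f).

Definition energy_form {X} (D : (X -> R) -> Prop)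
    (L : (X -> R) -> (X -> R) -> (X -> R) -> R) (f g : X -> R) : R :=
  / 4 * (energy D L (fadd f g) - energy D L (fsub f g)).

(* The bound |L_g(h)| <= 2 ||h||_sup E_L(g) turns an E_L-Cauchy sequence (f_n) into a Cauchy
   sequence for each form (f, g) |-> L_{f,g}(h) with h >= 0, so if also f_n -> 0 uniformly,
   closability of L gives L_{f_n}(h) -> 0.  By the Stone property the dual norm of a positive
   functional is controlled by its values on functions 0 <= h <= 1, and for those
   L_{f_n}(h) <= 2 L_{f_n - f_m}(h) + 2 L_{f_m}(h) <= 4 E_L(f_n - f_m) + 2 L_{f_m}(h);
   letting m -> oo bounds E_L(f_n). *)
From Stdlib Require Import Reals.
From Stdlib Require Import Lra ClassicalEpsilon FunctionalExtensionality PropExtensionality.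
Open Scope R_scope.

Lemma Rabs_le_bounds {a b : R} : Rabs a <= b -> - b <= a <= b.
Proof.
  intro Hab. pose proof (Rle_abs a). pose proof (Rle_abs (- a)).
  rewrite Rabs_Ropp in *. lra.
Qed.

Lemma le_epsilon_mult x y C : (forall c, 0 < c -> x <= y + C * c) -> x <= y.
Proof.
  intro H. apply Rle_plus_epsilon. intros eps Heps.
  pose proof (Rabs_pos C).
  set (c := eps / (Rabs C + 1)).
  assert (Hc : 0 < c) by (apply Rdiv_lt_0_compat; lra).
  assert (Hle : C * c <= eps).
  { apply Rle_trans with (Rabs C * c); [apply Rmult_le_compat_r; [lra | apply Rle_abs]|].
    apply Rmult_le_reg_r with (Rabs C + 1); [lra|]. unfold c. field_simplify; lra. }
  specialize (H c Hc). lra.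
Qed.

Lemma le_of_le_plus_mult_cv0 x y C (u : nat -> R) N :
  (forall m, (N <= m)%nat -> x <= y + C * u m) -> Un_cv u 0 -> x <= y.
Proof.
  intros Hle Hu. apply (le_epsilon_mult _ _ (Rabs C)). intros c Hc.
  destruct (Hu c Hc) as [M HM].
  specialize (HM (max N M) (Nat.le_max_r _ _)).
  specialize (Hle (max N M) (Nat.le_max_l _ _)).
  unfold R_dist in HM. rewrite Rminus_0_r in HM.
  assert (C * u (max N M) <= Rabs C * c).
  { apply Rle_trans with (Rabs (C * u (max N M))); [apply Rle_abs|].
    rewrite Rabs_mult. apply Rmult_le_compat_l; [apply Rabs_pos | lra]. }
  lra.
Qed.

Lemma fsub_fadd_fscal {X} (f g : X -> R) : fsub f g = fadd f (fscal (-1) g).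
Proof. apply functional_extensionality; intro x; unfold fsub, fadd, fscal; ring. Qed.

Lemma sup_le_fzero {X} : sup_le (@fzero X) 1.
Proof. intro x; unfold fzero; rewrite Rabs_R0; lra. Qed.

Section DualNorm.
Context {X : Type} {D : (X -> R) -> Prop}.
Hypothesis D0 : D fzero.

Definition unit_ball_bounded (l : (X -> R) -> R) : Prop :=
  exists M, forall h, D h -> sup_le h 1 -> Rabs (l h) <= M.

Lemma in_dual_unit_ball_bounded l : in_dual D l -> unit_ball_bounded l.
Proof. intros [_ [_ [C HC]]]. exists C. intros h Dh Hh. rewrite <- (Rmult_1_r C). auto. Qed.

Lemma dual_norm_is_lub l : unit_ball_bounded l ->
  is_lub (fun y => exists h, D h /\ sup_le h 1 /\ y = Rabs (l h)) (dual_norm D l).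
Proof.
  intros [M HM]. unfold dual_norm. apply epsilon_spec.
  destruct (completeness (fun y => exists h, D h /\ sup_le h 1 /\ y = Rabs (l h))) as [m Hm].
  - exists M. intros y [h [Dh [Hh ->]]]. auto.
  - exists (Rabs (l fzero)), fzero. auto using sup_le_fzero.
  - exists m. exact Hm.
Qed.

Lemma dual_norm_ge l h : unit_ball_bounded l -> D h -> sup_le h 1 ->
  Rabs (l h) <= dual_norm D l.
Proof. intros Hl Dh Hh. apply (dual_norm_is_lub _ Hl). exists h. auto. Qed.

Lemma dual_norm_le l M : (forall h, D h -> sup_le h 1 -> Rabs (l h) <= M) ->
  dual_norm D l <= M.
Proof.
  intro HM. apply (dual_norm_is_lub _ (ex_intro _ M HM)).
  intros y [h [Dh [Hh ->]]]. auto.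
Qed.

Lemma dual_norm_ge0 l : unit_ball_bounded l -> 0 <= dual_norm D l.
Proof.
  intro Hl. apply Rle_trans with (Rabs (l fzero)); [apply Rabs_pos|].
  apply dual_norm_ge; auto using sup_le_fzero.
Qed.

Lemma dual_norm_ext l1 l2 : (forall h, D h -> l1 h = l2 h) ->
  dual_norm D l1 = dual_norm D l2.
Proof.
  intro E. unfold dual_norm. do 2 f_equal.
  apply functional_extensionality; intro y. apply propositional_extensionality.
  split; intros [h [Dh [Hh ->]]]; exists h; rewrite E; auto.
Qed.

Lemma dual_norm_scal a l : 0 <= a -> unit_ball_bounded l ->
  dual_norm D (fun h => a * l h) = a * dual_norm D l.
Proof.
  intros Ha Hl. apply Rle_antisym.
  - apply dual_norm_le. intros h Dh Hh.
    rewrite Rabs_mult, Rabs_pos_eq by exact Ha.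
    apply Rmult_le_compat_l; auto using dual_norm_ge.
  - destruct (Req_dec a 0) as [->|Ha0].
    + rewrite Rmult_0_l. apply dual_norm_ge0.
      exists 0. intros h _ _. rewrite Rmult_0_l, Rabs_R0. lra.
    + assert (Hal : unit_ball_bounded (fun h => a * l h)).
      { destruct Hl as [M HM]. exists (a * M). intros h Dh Hh.
        rewrite Rabs_mult, Rabs_pos_eq by exact Ha. apply Rmult_le_compat_l; auto. }
      apply Rmult_le_reg_l with (/ a); [apply Rinv_0_lt_compat; lra|].
      rewrite <- Rmult_assoc, Rinv_l, Rmult_1_l by exact Ha0.
      apply dual_norm_le. intros h Dh Hh.
      replace (Rabs (l h)) with (/ a * Rabs (a * l h))
        by (rewrite Rabs_mult, Rabs_pos_eq by exact Ha; field; exact Ha0).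
      apply Rmult_le_compat_l; [left; apply Rinv_0_lt_compat; lra|].
      exact (dual_norm_ge (fun h => a * l h) h Hal Dh Hh).
Qed.

End DualNorm.

Section Algebra.
Context {X : Type} {D : (X -> R) -> Prop}.
Hypothesis HB : bounded_algebra D.

Lemma algebra_zero : D fzero.
Proof. apply (proj1 HB). Qed.

Lemma algebra_add f g : D f -> D g -> D (fadd f g).
Proof. apply (proj1 (proj2 HB)). Qed.

Lemma algebra_scal a f : D f -> D (fscal a f).
Proof. apply (proj1 (proj2 (proj2 HB))). Qed.

Lemma algebra_bounded f : D f -> exists c, 0 < c /\ sup_le f c.
Proof.
  intro Df. destruct (proj2 (proj2 (proj2 (proj2 HB))) f Df) as [c0 Hc0].
  exists (Rabs c0 + 1). split; [pose proof (Rabs_pos c0); lra|].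
  intro x. specialize (Hc0 x). pose proof (Rle_abs c0). lra.
Qed.

Lemma algebra_sub f g : D f -> D g -> D (fsub f g).
Proof. intros Df Dg. rewrite fsub_fadd_fscal. auto using algebra_add, algebra_scal. Qed.

Lemma in_dual_sub l f g : in_dual D l -> D f -> D g -> l (fsub f g) = l f - l g.
Proof.
  intros [Hadd [Hscal _]] Df Dg.
  rewrite fsub_fadd_fscal, Hadd, Hscal by auto using algebra_scal. ring.
Qed.

Lemma in_dual_abs_le l h c : in_dual D l -> D h -> sup_le h c -> 0 < c ->
  Rabs (l h) <= c * dual_norm D l.
Proof.
  intros Hl Dh Hh Hc.
  assert (Hh1 : sup_le (fscal (/ c) h) 1).
  { intro x. unfold fscal. rewrite Rabs_mult, Rabs_inv, Rabs_pos_eq by lra.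
    apply Rmult_le_reg_l with c; [exact Hc|].
    rewrite <- Rmult_assoc, Rinv_r, Rmult_1_l by lra. rewrite Rmult_1_r. apply Hh. }
  pose proof (dual_norm_ge algebra_zero _ _ (in_dual_unit_ball_bounded _ Hl)
                (algebra_scal (/ c) _ Dh) Hh1) as Hle.
  destruct Hl as [_ [Hscal _]]. rewrite Hscal in Hle by exact Dh.
  rewrite Rabs_mult, Rabs_inv, Rabs_pos_eq in Hle by lra.
  apply Rmult_le_reg_l with (/ c); [apply Rinv_0_lt_compat; exact Hc|].
  rewrite <- Rmult_assoc, Rinv_l, Rmult_1_l by lra. exact Hle.
Qed.

Section Stone.
Hypothesis HS : stone_property D.

Lemma stone_min_const g c : 0 < c -> D g -> D (fun x => Rmin (g x) c).
Proof.
  intros Hc Dg.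
  replace (fun x => Rmin (g x) c) with (fscal c (fun x => Rmin (fscal (/ c) g x) 1)).
  - apply algebra_scal, HS, algebra_scal, Dg.
  - apply functional_extensionality; intro x. unfold fscal, Rmin.
    destruct (Rle_dec (/ c * g x) 1) as [H1|H1]; destruct (Rle_dec (g x) c) as [H2|H2].
    + field; lra.
    + exfalso. apply H2. apply Rmult_le_reg_l with (/ c); [apply Rinv_0_lt_compat; lra|].
      rewrite Rinv_l by lra. exact H1.
    + exfalso. apply H1. rewrite <- (Rinv_l c) by lra.
      apply Rmult_le_compat_l; [left; apply Rinv_0_lt_compat|]; lra.
    + ring.
Qed.

(* Write h = (h - c)^+ - (h + c)^- + w with |w| <= c: both truncated parts lie in [0, 1]. *)
Lemma positive_dual_abs_le l P : in_dual D l -> positive_functional D l ->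
  (forall h, D h -> (forall x, 0 <= h x) -> sup_le h 1 -> l h <= P) ->
  forall h, D h -> sup_le h 1 -> Rabs (l h) <= P.
Proof.
  intros Hl Hpos HP h Dh Hh.
  pose proof Hl as [Hadd [_ [C HC]]].
  apply (le_epsilon_mult _ _ C). intros c Hc.
  set (u := fsub h (fun x => Rmin (h x) c)).
  set (v := fsub (fscal (-1) h) (fun x => Rmin (fscal (-1) h x) c)).
  set (w := fadd (fsub h u) v).
  assert (Du : D u) by (apply algebra_sub; auto using stone_min_const).
  assert (Dv : D v)
    by (apply algebra_sub; auto using algebra_scal, stone_min_const).
  assert (Dw : D w) by (apply algebra_add; auto using algebra_sub).
  assert (Hlw : l h = l w + l u - l v).
  { unfold w. rewrite Hadd, in_dual_sub by auto using algebra_sub. ring. }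
  assert (Hbounds : forall x, 0 <= u x <= 1 /\ 0 <= v x <= 1 /\ Rabs (w x) <= c).
  { intro x. pose proof (Rabs_le_bounds (Hh x)).
    unfold w, u, v, fadd, fsub, fscal, Rmin.
    destruct (Rle_dec (h x) c); destruct (Rle_dec (-1 * h x) c);
      repeat split; try lra; apply Rabs_le; lra. }
  assert (Pu : 0 <= l u <= P).
  { split; [apply Hpos|apply HP]; auto; intro x; pose proof (Hbounds x); try apply Rabs_le; lra. }
  assert (Pv : 0 <= l v <= P).
  { split; [apply Hpos|apply HP]; auto; intro x; pose proof (Hbounds x); try apply Rabs_le; lra. }
  pose proof (Rabs_le_bounds (HC w c Dw (fun x => proj2 (proj2 (Hbounds x))))).
  rewrite Hlw. apply Rabs_le. lra.
Qed.

End Stone.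
End Algebra.

Section Lagrangian.
Context {X : Type} {D : (X -> R) -> Prop} {L : (X -> R) -> (X -> R) -> (X -> R) -> R}.
Hypothesis HB : bounded_algebra D.
Hypothesis HL : lagrangian D L.

Lemma lagrangian_in_dual f g : D f -> D g -> in_dual D (L f g).
Proof. apply HL. Qed.

Lemma lagrangian_sym f g h : D f -> D g -> D h -> L f g h = L g f h.
Proof. apply HL. Qed.

Lemma lagrangian_add f1 f2 g h : D f1 -> D f2 -> D g -> D h ->
  L (fadd f1 f2) g h = L f1 g h + L f2 g h.
Proof. apply HL. Qed.

Lemma lagrangian_scal a f g h : D f -> D g -> D h -> L (fscal a f) g h = a * L f g h.
Proof. apply HL. Qed.

Lemma lagrangian_pos f : D f -> positive_functional D (L f f).
Proof. apply HL. Qed.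

Lemma lagrangian_diag_add f g h : D f -> D g -> D h ->
  L (fadd f g) (fadd f g) h = L f f h + 2 * L f g h + L g g h.
Proof.
  intros Df Dg Dh. pose proof (algebra_add HB _ _ Df Dg) as Dfg.
  rewrite lagrangian_add, (lagrangian_sym f (fadd f g)), (lagrangian_sym g (fadd f g)),
    !lagrangian_add by auto.
  rewrite (lagrangian_sym g f) by auto. ring.
Qed.

Lemma lagrangian_diag_scal a f h : D f -> D h ->
  L (fscal a f) (fscal a f) h = a * a * L f f h.
Proof.
  intros Df Dh. pose proof (algebra_scal HB a _ Df) as Daf.
  rewrite lagrangian_scal, (lagrangian_sym f), lagrangian_scal by auto. ring.
Qed.

Lemma lagrangian_diag_add_le f g h : D f -> D g -> D h -> (forall x, 0 <= h x) ->
  L (fadd f g) (fadd f g) h <= 2 * L f f h + 2 * L g g h.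
Proof.
  intros Df Dg Dh Hh.
  pose proof (algebra_scal HB (-1) _ Dg) as Dg'.
  assert (Hdiff : 0 <= L (fadd f (fscal (-1) g)) (fadd f (fscal (-1) g)) h)
    by (apply lagrangian_pos; auto; apply (algebra_add HB); auto).
  rewrite lagrangian_diag_add, lagrangian_diag_scal, (lagrangian_sym f (fscal (-1) g)), lagrangian_scal,
    (lagrangian_sym g) in Hdiff by auto.
  rewrite lagrangian_diag_add by auto. lra.
Qed.

Lemma energy_scal a f : D f -> energy D L (fscal a f) = a * a * energy D L f.
Proof.
  intro Df. unfold energy.
  rewrite (dual_norm_ext _ (fun h => a * a * L f f h))
    by (intros; apply lagrangian_diag_scal; auto).
  rewrite (dual_norm_scal (algebra_zero HB) (a * a) (L f f)); [ring | nra |].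
  apply in_dual_unit_ball_bounded, lagrangian_in_dual; auto.
Qed.

Lemma energy_form_diag f : D f -> energy_form D L f f = energy D L f.
Proof.
  intro Df. unfold energy_form.
  replace (fadd f f) with (fscal 2 f)
    by (apply functional_extensionality; intro x; unfold fadd, fscal; ring).
  replace (fsub f f) with (fscal 0 f)
    by (apply functional_extensionality; intro x; unfold fsub, fscal; ring).
  rewrite !energy_scal by exact Df. field.
Qed.

Lemma energy_ge0 f : D f -> 0 <= energy D L f.
Proof.
  intro Df. unfold energy. apply Rmult_le_pos; [lra|].
  apply (dual_norm_ge0 (algebra_zero HB)), in_dual_unit_ball_bounded, lagrangian_in_dual; auto.
Qed.

Lemma lagrangian_abs_le_energy f h c : D f -> D h -> sup_le h c -> 0 < c ->
  Rabs (L f f h) <= 2 * c * energy D L f.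
Proof.
  intros Df Dh Hh Hc. unfold energy.
  replace (2 * c * (/ 2 * dual_norm D (L f f))) with (c * dual_norm D (L f f)) by field.
  apply (in_dual_abs_le HB); auto using lagrangian_in_dual.
Qed.

Lemma lagrangian_le_energy_sub f g h : D f -> D g -> D h ->
  (forall x, 0 <= h x) -> sup_le h 1 ->
  L f f h <= 4 * energy D L (fsub f g) + 2 * L g g h.
Proof.
  intros Df Dg Dh Hh0 Hh1. pose proof (algebra_sub HB _ _ Df Dg) as Dfg.
  replace f with (fadd (fsub f g) g) at 1 2
    by (apply functional_extensionality; intro x; unfold fadd, fsub; ring).
  pose proof (lagrangian_diag_add_le _ _ _ Dfg Dg Dh Hh0).
  pose proof (lagrangian_abs_le_energy _ _ _ Dfg Dh Hh1 Rlt_0_1).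
  pose proof (Rle_abs (L (fsub f g) (fsub f g) h)). lra.
Qed.

Lemma energy_le_of_positive_le (HS : stone_property D) f e : D f ->
  (forall h, D h -> (forall x, 0 <= h x) -> sup_le h 1 -> L f f h <= 2 * e) ->
  energy D L f <= e.
Proof.
  intros Df Hle. unfold energy.
  cut (dual_norm D (L f f) <= 2 * e); [lra|].
  apply (dual_norm_le (algebra_zero HB)). apply (positive_dual_abs_le HB HS);
    auto using lagrangian_in_dual, lagrangian_pos.
Qed.

End Lagrangian.

Section Closability.
Context {X : Type} {D : (X -> R) -> Prop} {L : (X -> R) -> (X -> R) -> (X -> R) -> R}.
Hypothesis HB : bounded_algebra D.
Hypothesis HS : stone_property D.
Hypothesis HL : lagrangian D L.
Hypothesis HC : lagrangian_sup_norm_closable D L.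
Variable fs : nat -> X -> R.
Hypothesis Dfs : forall n, D (fs n).
Hypothesis fs_cauchy : forall eps, 0 < eps -> exists N, forall n m, (N <= n)%nat -> (N <= m)%nat ->
  Rabs (energy_form D L (fsub (fs n) (fs m)) (fsub (fs n) (fs m))) < eps.
Hypothesis fs_uniform : forall eps, 0 < eps -> exists N, forall n, (N <= n)%nat -> sup_le (fs n) eps.

Lemma energy_sub_cauchy eps : 0 < eps -> exists N, forall n m, (N <= n)%nat -> (N <= m)%nat ->
  energy D L (fsub (fs n) (fs m)) < eps.
Proof.
  intros Heps. destruct (fs_cauchy _ Heps) as [N HN]. exists N. intros n m Hn Hm.
  specialize (HN n m Hn Hm).
  pose proof (algebra_sub HB _ _ (Dfs n) (Dfs m)) as Dnm.
  rewrite (energy_form_diag HB HL _ Dnm), Rabs_pos_eq in HN by exact (energy_ge0 HB HL _ Dnm).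
  exact HN.
Qed.

Lemma lagrangian_seq_cv0 h : D h -> (forall x, 0 <= h x) ->
  Un_cv (fun n => L (fs n) (fs n) h) 0.
Proof.
  intros Dh Hh. apply (HC h Dh Hh fs Dfs); [|exact fs_uniform].
  destruct (algebra_bounded HB _ Dh) as [c [Hc Hhc]].
  intros eps Heps.
  destruct (energy_sub_cauchy (eps / (2 * c))) as [N HN]; [apply Rdiv_lt_0_compat; lra|].
  exists N. intros n m Hn Hm. specialize (HN n m Hn Hm).
  eapply Rle_lt_trans;
    [exact (lagrangian_abs_le_energy HB HL _ _ _ (algebra_sub HB _ _ (Dfs n) (Dfs m)) Dh Hhc Hc)|].
  apply Rmult_lt_reg_l with (/ (2 * c)); [apply Rinv_0_lt_compat; lra|].
  replace (/ (2 * c) * eps) with (eps / (2 * c)) by (field; lra).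
  replace (/ (2 * c) * (2 * c * energy D L (fsub (fs n) (fs m))))
    with (energy D L (fsub (fs n) (fs m))) by (field; lra).
  exact HN.
Qed.

Lemma energy_seq_cv0 : Un_cv (fun n => energy D L (fs n)) 0.
Proof.
  intros eps Heps. destruct (energy_sub_cauchy (eps / 8)) as [N HN]; [lra|].
  exists N. intros n Hn. unfold R_dist. rewrite Rminus_0_r.
  rewrite Rabs_pos_eq by (apply (energy_ge0 HB HL); auto).
  apply Rle_lt_trans with (eps / 2); [|lra].
  apply (energy_le_of_positive_le HB HL HS); auto. intros h Dh Hh0 Hh1.
  apply (le_of_le_plus_mult_cv0 _ _ 2 (fun m => L (fs m) (fs m) h) N).
  - intros m Hm. pose proof (HN n m Hn Hm).
    pose proof (lagrangian_le_energy_sub HB HL (fs n) (fs m) h (Dfs n) (Dfs m) Dh Hh0 Hh1).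
    lra.
  - exact (lagrangian_seq_cv0 h Dh Hh0).
Qed.

End Closability.

Theorem propositionP (X : Type) (D : (X -> R) -> Prop)
    (L : (X -> R) -> (X -> R) -> (X -> R) -> R) :
  bounded_algebra D -> stone_property D ->
  lagrangian D L -> lagrangian_sup_norm_closable D L ->
  sup_norm_closable D (energy_form D L).
Proof.
  intros HB HS HL HC fs Dfs fs_cauchy fs_uniform eps Heps.
  destruct (energy_seq_cv0 HB HS HL HC fs Dfs fs_cauchy fs_uniform eps Heps) as [N HN].
  exists N. intros n Hn. rewrite energy_form_diag by auto. exact (HN n Hn).
Qed.
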